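(* Let $X$ be a compact metric space, $f:X\to X$ continuous, $n\ge1$ an integer and $x\in X$. If $\omega_f(x)\subset \mathrm{Fix}(f^n)$, then the number of connected components of $\omega_f(x)$ divides $n$.
   Context: $\mathrm{Fix}(g)$ denotes the set of fixed points of $g$, and $f^n$ is the $n$-th iterate of $f$. The $\omega$-limit set is $\omega_f(x)=\{y\in X:\ \exists\, n_i\to+\infty,\ f^{n_i}(x)\to y\}$. *)

From HB Require Import structures.
From mathcomp Require Import all_boot all_order all_algebra.
From mathcomp Require Import all_classical all_reals all_analysis.
Set Implicit Arguments. Unset Strict Implicit. Unset Printing Implicit Defensive.
Import Order.TTheory GRing.Theory Num.Theory.
Local Open Scope classical_set_scope.

Definition omega_limit {X : topologicalType} (f : X -> X) (x : X) : set X :=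
  [set y | exists phi : nat -> nat,
      (forall M : nat, \forall i \near \oo, (M <= phi i)%N) /\
      ((fun i => iter (phi i) f x) @ \oo --> y)].

Definition Fix {X : Type} (g : X -> X) : set X := [set y | g y = y].

Definition components {X : topologicalType} (A : set X) : set (set X) :=
  connected_component A @` A.

From HB Require Import structures.
From mathcomp Require Import all_boot all_order all_algebra.
From mathcomp Require Import all_classical all_reals all_analysis.
From mathcomp Require Import zify.
Set Implicit Arguments. Unset Strict Implicit. Unset Printing Implicit Defensive.
Import Order.TTheory GRing.Theory Num.Theory.
Local Open Scope classical_set_scope.
Local Open Scope ring_scope.
Local Open Scope card_scope.

(* Write g = f^n and C_i = omega_g(f^i x).  Then omega_f(x) is the union of
   C_0, ..., C_(n-1), with f(C_i) in C_(i+1) and C_(i+n) = C_i.  Each C_i is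
   connected: were it split into two separated pieces, the g-orbit of f^i x
   would jump infinitely often from near one piece to near the other, and a
   cluster point of these jumps would be a fixed point of g close to both.
   So the component K_i of omega_f(x) containing C_i satisfies f(K_i) in
   K_(i+1); these are all the components, and i |-> K_i is n-periodic, so the
   number of distinct K_i is its minimal period, a divisor of n. *)

Definition infinitely_often (P : nat -> Prop) : Prop :=
  forall M, exists2 m, (M <= m)%N & P m.

Lemma infinitely_often_switch (P Q : nat -> Prop) (M0 : nat) :
  (forall m, (M0 <= m)%N -> P m \/ Q m) ->
  infinitely_often P -> infinitely_often Q ->
  infinitely_often (fun m => P m /\ Q m.+1).
Proof.
move=> PQ ioP ioQ M.
have step k : forall m, (M0 <= m)%N -> P m -> Q (m + k).+1 ->
    exists2 j, (m <= j)%N & P j /\ Q j.+1.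
  elim: k => [|k IH] m M0m Pm; first by rewrite addn0 => Qm; exists m.
  case: (PQ m.+1 (leqW M0m)) => [Pm1|Qm1]; last by exists m.
  rewrite -addSnnS => /(IH _ (leqW M0m) Pm1) [j mj PQj].
  by exists j => //; exact: ltnW.
have [ma Mma Pma] := ioP (maxn M M0).
have [mb mamb Qmb] := ioQ ma.+1.
have mbE : (ma + (mb - ma.+1)).+1 = mb by lia.
move: Qmb; rewrite -mbE => /(step _ ma (leq_trans (leq_maxr _ _) Mma) Pma)[j maj PQj].
by exists j => //; lia.
Qed.

Lemma infinitely_oftenT : infinitely_often (fun=> True).
Proof. by move=> M; exists M. Qed.

Section ClusterPoints.
Variables (R : realType) (X : pseudoMetricType R).
Implicit Types (u : nat -> X) (y : X) (e : R).

Definition cluster_seq u : set X :=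
  [set y | forall e, 0 < e -> infinitely_often (fun m => ball y e (u m))].

Lemma compact_infinitely_often_cluster u (P : nat -> Prop) :
  compact [set: X] -> infinitely_often P ->
  exists y, forall e, 0 < e -> infinitely_often (fun m => P m /\ ball y e (u m)).
Proof.
move=> cX ioP.
pose B M := [set m | (M <= m)%N /\ P m].
have BF : ProperFilter (filter_from setT B).
  apply: filter_from_proper; last by move=> M _; have [m] := ioP M; exists m.
  apply: filter_fromT_filter; first by exists 0%N.
  by move=> i j; exists (maxn i j) => m [ijm Pm]; do 2?split => //;
    apply: leq_trans ijm; rewrite ?leq_maxl ?leq_maxr.
have [y [_ yclu]] := cX (u @ filter_from setT B) _ filterT.
exists y => e e0 M.
have uB : (u @ filter_from setT B) (u @` B M) by exists M => // m Bm; exists m.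
by have [_ [[m [Mm Pm] <-] ?]] := yclu _ _ uB (nbhsx_ballx _ _ e0); exists m.
Qed.

Lemma cluster_seq_neq0 u : compact [set: X] -> cluster_seq u !=set0.
Proof.
move=> cX; have [y yclu] := compact_infinitely_often_cluster u cX infinitely_oftenT.
by exists y => e e0 M; have [m Mm []] := yclu e e0 M; exists m.
Qed.

Lemma closed_cluster_seq u : closed (cluster_seq u).
Proof.
move=> y ycl e e0 M.
have e20 : 0 < e / 2 by rewrite divr_gt0.
have [c [cclu yc]] := ycl _ (nbhsx_ballx _ _ e20).
have [m Mm cm] := cclu _ e20 M.
by exists m => //; rewrite (splitr e); exact: ball_triangle yc cm.
Qed.

Lemma cluster_seqS u : cluster_seq (fun m => u m.+1) = cluster_seq u.
Proof.
apply/seteqP; split => y yclu e e0 M.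
  by have [m Mm ym] := yclu e e0 M; exists m.+1 => //; exact: leqW.
by have [[|m] // Mm ym] := yclu e e0 M.+1; exists m.
Qed.

Lemma cluster_seq_sub u (g : nat -> nat) :
  (forall m, (m <= g m)%N) -> cluster_seq (u \o g) `<=` cluster_seq u.
Proof.
move=> gge y yclu e e0 M; have [m Mm ym] := yclu e e0 M.
by exists (g m) => //; exact: leq_trans Mm (gge m).
Qed.

Lemma cluster_seq_image u (f : X -> X) :
  continuous f -> f @` cluster_seq u `<=` cluster_seq (f \o u).
Proof.
move=> cf _ [y yclu <-] e e0 M.
have [d d0 fball] := (nbhs_ballP _ _).1 (cvg_ball (cf y) e0).
by have [m Mm ym] := yclu d d0 M; exists m => //; exact: fball.
Qed.

Lemma not_cluster_seq_uniform (v : nat -> nat -> X) y k :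
  (forall i, (i < k)%N -> ~ cluster_seq (v i) y) ->
  exists2 e, 0 < e & exists M, forall i m, (i < k)%N -> (M <= m)%N ->
    ~ ball y e (v i m).
Proof.
elim: k => [_|k IH notclu]; first by exists 1 => //; exists 0%N.
have [e e0 [M farM]] := IH (fun i ik => notclu i (ltnW ik)).
have [e' e'0 [M' farM']] : exists2 e', 0 < e' & exists M', forall m,
    (M' <= m)%N -> ~ ball y e' (v k m).
  apply: contrapT => near; apply: (notclu k (ltnSn k)) => e' e'0 M'.
  apply: contrapT => far; apply: near; exists e' => //; exists M' => m M'm ym.
  by apply: far; exists m.
exists (Order.min e e'); first by rewrite lt_min e0 e'0.
exists (maxn M M') => i m; rewrite ltnS leq_eqVlt geq_max => /orP[/eqP-> | ik]
  /andP[Mm M'm] ym.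
  by apply: (farM' m M'm); apply: le_ball ym; rewrite ge_min lexx orbT.
by apply: (farM i m ik Mm); apply: le_ball ym; rewrite ge_min lexx.
Qed.

Lemma cluster_seq_cover u n : (0 < n)%N ->
  cluster_seq u `<=` \bigcup_(i in `I_n) cluster_seq (fun m => u (n * m + i)%N).
Proof.
move=> n0 y yclu; apply: contrapT => notclu.
have [e e0 [M far]] := @not_cluster_seq_uniform (fun i m => u (n * m + i)%N) y n
  (fun i ilt yi => notclu (ex_intro2 _ _ i ilt yi)).
have [m Mm ym] := yclu e e0 (M * n)%N.
apply: (far (m %% n)%N (m %/ n)%N); first by rewrite ltn_pmod.
  by rewrite leq_divRL.
by rewrite mulnC -divn_eq.
Qed.

End ClusterPoints.

Section CompactPseudoMetric.
Variables (R : realType) (X : pseudoMetricType R).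
Hypothesis cX : compact [set: X].

Lemma separated_ball_gap (A B : set X) : closed (A `|` B) -> separated A B ->
  exists2 d : R, 0 < d & forall a b, A a -> B b -> ~ ball a d b.
Proof.
move=> AUB_closed [clA_B A_clB]; apply: contrapT => nogap.
have /choice [ab abP] : forall k : nat, exists ab : X * X,
    [/\ A ab.1, B ab.2 & ball ab.1 k.+1%:R^-1 ab.2].
  move=> k; apply: contrapT => far; apply: nogap; exists k.+1%:R^-1 => // a b Aa Bb.
  by move=> abk; apply: far; exists (a, b).
have [p pclu] := compact_infinitely_often_cluster (fst \o ab) cX infinitely_oftenT.
have clAp : closure A p.
  move=> S /nbhs_ballP[e e0 pS]; have [m _ [_ pm]] := pclu e e0 0%N.
  by exists (ab m).1; split; [case: (abP m) | exact: pS].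
have clBp : closure B p.
  move=> S /nbhs_ballP[e e0 pS].
  have e20 : 0 < e / 2 by rewrite divr_gt0.
  have [K _ Kinv] := near_infty_natSinv_lt (PosNum e20).
  have [m Km [_ pm]] := pclu _ e20 K; have [_ Bm abm] := abP m.
  exists (ab m).2; split => //; apply: pS; rewrite (splitr e).
  by apply: ball_triangle pm _; apply: le_ball abm; apply/ltW/Kinv.
have [Ap | Bp] : (A `|` B) p by apply: AUB_closed; exact: closureS clAp.
  by have : (A `&` closure B) p by []; rewrite A_clB.
by have : (closure A `&` B) p by []; rewrite clA_B.
Qed.

Lemma eventually_near_cluster_seq (u : nat -> X) (e : R) : 0 < e ->
  exists M, forall m, (M <= m)%N -> exists2 c, cluster_seq u c & ball c e (u m).
Proof.
move=> e0; apply: contrapT => nonear.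
have ioFar : infinitely_often (fun m => ~ exists2 c, cluster_seq u c & ball c e (u m)).
  move=> M; apply: contrapT => farM; apply: nonear; exists M => m Mm.
  by apply: contrapT => far; apply: farM; exists m.
have [p pclu] := compact_infinitely_often_cluster u cX ioFar.
have [m _ [far pm]] := pclu e e0 0%N.
by apply: far; exists p => // e' e'0 M; have [m' Mm' []] := pclu e' e'0 M; exists m'.
Qed.

Lemma connected_cluster_seq_orbit (g : X -> X) (z : X) : continuous g ->
  cluster_seq (fun m => iter m g z) `<=` Fix g ->
  connected (cluster_seq (fun m => iter m g z)).
Proof.
set u := fun m => iter m g z; set C := cluster_seq u => cg Cfix.
apply: contrapT => /connectedPn[E [E0 CE sepE]].
set A := E false; set B := E true.
have AUB_closed : closed (A `|` B) by rewrite -CE; exact: closed_cluster_seq.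
have [d d0 gap] := separated_ball_gap AUB_closed sepE.
have d20 : 0 < d / 2 by rewrite divr_gt0.
pose nbhsd (S : set X) (w : X) := exists2 a, S a & ball a (d / 2) w.
have nbhsdAB w : nbhsd A w -> nbhsd B w -> False.
  move=> [a Aa aw] [b Bb bw]; apply: (gap a b Aa Bb).
  by rewrite (splitr d); apply: ball_triangle aw _; exact: ball_sym.
have [M0 nearC] := eventually_near_cluster_seq u d20.
have io_nbhsd S : S `<=` C -> S !=set0 -> infinitely_often (nbhsd S \o u).
  move=> SC [a Sa] M; have [m Mm am] := SC a Sa _ d20 M.
  by exists m => //; exists a.
have nbhsdAorB m : (M0 <= m)%N -> nbhsd A (u m) \/ nbhsd B (u m).
  by move=> /nearC[c]; rewrite -/C CE => -[Ac|Bc] cm; [left|right]; exists c.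
have ioA : infinitely_often (nbhsd A \o u).
  by apply: io_nbhsd (E0 false); rewrite CE; exact: subsetUl.
have ioB : infinitely_often (nbhsd B \o u).
  by apply: io_nbhsd (E0 true); rewrite CE; exact: subsetUr.
have [p pclu] := compact_infinitely_often_cluster u cX
  (infinitely_often_switch nbhsdAorB ioA ioB).
have Cp : C p by move=> e e0 M; have [m Mm []] := pclu e e0 M; exists m.
have [eta eta0 gball] := (nbhs_ballP _ _).1 (cvg_ball (cg p) d20).
have etad0 : 0 < Order.min eta (d / 2) by rewrite lt_min eta0 d20.
have [m _ [[Aum Bum1] pum]] := pclu _ etad0 0%N.
have pum1 : ball p (d / 2) (u m.+1).
  by rewrite -[in ball p](Cfix p Cp); apply: gball; apply: le_ball pum; rewrite ge_min lexx.
have {}pum : ball p (d / 2) (u m) by apply: le_ball pum; rewrite ge_min lexx orbT.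
move: Cp; rewrite CE => -[Ap|Bp].
  by apply: (nbhsdAB (u m.+1)) => //; exists p.
by apply: (nbhsdAB (u m)) => //; exists p.
Qed.

End CompactPseudoMetric.

Section PeriodicSequence.
Variables (T : Type) (K : nat -> T) (n : nat).
Hypotheses (n_gt0 : (0 < n)%N)
  (K_shift : forall i j, K i = K j -> K i.+1 = K j.+1)
  (K_periodic : forall i, K (i + n)%N = K i).

Lemma eq_shift_addn i j k : K i = K j -> K (i + k)%N = K (j + k)%N.
Proof. by elim: k => [|k IH]; rewrite ?addn0 // !addnS => /IH/K_shift. Qed.

Lemma periodic_minimal_period :
  exists d, [/\ (d %| n)%N, K @` `I_n = K @` `I_d & {in `I_d &, injective K}].
Proof.
have ex_period : exists d, (0 < d)%N && `[< K d = K 0%N >].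
  by exists n; rewrite n_gt0 /=; apply/asboolP; rewrite -(K_periodic 0) add0n.
case: (ex_minnP ex_period) => d /andP[d_gt0 /asboolP Kd] d_min.
have Kmod m : K m = K (m %% d)%N.
  rewrite {1}(divn_eq m d); elim: (m %/ d)%N => [|q IH]; first by rewrite add0n.
  by rewrite mulSn -addnA (eq_shift_addn _ Kd) add0n.
have d_le j : (0 < j)%N -> K j = K 0%N -> (d <= j)%N.
  by move=> j_gt0 Kj; apply: d_min; rewrite j_gt0; exact/asboolP.
have d_le_n : (d <= n)%N by apply: d_le; rewrite // -(K_periodic 0) add0n.
exists d; split.
- rewrite /dvdn eqn0Ngt; apply/negP => nd_gt0.
  have := d_le _ nd_gt0; rewrite -Kmod -(K_periodic 0) add0n => /(_ erefl).
  by rewrite leqNgt ltn_pmod.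
- apply/seteqP; split => _ [i ilt <-].
    by exists (i %% d)%N; rewrite /= ?ltn_pmod // -Kmod.
  by exists i => //; exact: leq_trans ilt d_le_n.
- have lt_inj i j : (i < j < d)%N -> K i = K j -> False.
    move=> /andP[ij jd] /(eq_shift_addn (n - i)).
    have -> : (i + (n - i) = 0 + n)%N by lia.
    have -> : (j + (n - i) = (j - i) + n)%N by lia.
    rewrite !K_periodic => /esym Kji.
    by have := d_le (j - i)%N ltac:(lia) Kji; lia.
  move=> i j; rewrite !inE /= => id jd Kij.
  case: (ltngtP i j) => // [ij|ji]; exfalso.
    by apply: (lt_inj i j) => //; rewrite ij.
  by apply: (lt_inj j i) => //; rewrite ji.
Qed.

End PeriodicSequence.

Section CyclicCover.
Variables (T : topologicalType) (f : T -> T) (W : set T) (C : nat -> set T).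
Variable n : nat.
Hypotheses (n_gt0 : (0 < n)%N) (cf : continuous f)
  (C_neq0 : forall i, C i !=set0) (C_connected : forall i, connected (C i))
  (C_sub : forall i, C i `<=` W) (W_cover : W `<=` \bigcup_(i in `I_n) C i)
  (C_image : forall i, f @` C i `<=` C i.+1)
  (C_periodic : forall i, C (i + n)%N = C i).

(* A single component, as C i is connected. *)
Let K i := \bigcup_(a in C i) connected_component W a.

Lemma image_cover_sub : f @` W `<=` W.
Proof.
by move=> _ [a /W_cover[i _ Cia] <-]; exact: (C_sub (C_image (imageP f Cia))).
Qed.

Lemma component_image a b : connected_component W a b ->
  connected_component W (f a) (f b).
Proof.
move=> [B [Ba BW cB] Bb].
apply: (connected_component_max (B := f @` B)); last exact: imageP.
- exact: imageP.
- by move=> _ [c Bc <-]; apply: image_cover_sub; exists c => //; exact: BW.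
- by apply: connected_continuous_connected cB _; exact: continuous_subspaceT.
Qed.

Lemma cover_componentE i a : C i a -> K i = connected_component W a.
Proof.
move=> Cia; apply/seteqP; split => [y [b Cib b_y]|y a_y]; last by exists a.
have ab := connected_component_max Cia (@C_sub i) (@C_connected i) Cib.
by rewrite (same_connected_component ab).
Qed.

Lemma cover_component_shift i j : K i = K j -> K i.+1 = K j.+1.
Proof.
have [a Cia] := C_neq0 i; have [b Cjb] := C_neq0 j.
rewrite (cover_componentE Cia) (cover_componentE Cjb) => ab.
rewrite (cover_componentE (C_image (imageP f Cia))).
rewrite (cover_componentE (C_image (imageP f Cjb))).
apply/same_connected_component/component_image; rewrite ab.
exact/connected_component_refl/(C_sub Cjb).
Qed.

Lemma components_cyclic_cover : components W = K @` `I_n.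
Proof.
apply/seteqP; split => [_ [y /[dup] /W_cover[i ilt Ciy] _ <-]|_ [i _ <-]].
  by exists i => //; exact: cover_componentE.
have [a Cia] := C_neq0 i.
by exists a; [exact: C_sub Cia | rewrite (cover_componentE Cia)].
Qed.

Lemma card_components_cyclic_cover :
  exists k, (k %| n)%N /\ components W #= `I_k.
Proof.
have K_periodic i : K (i + n)%N = K i by rewrite /K C_periodic.
have [d [dn K_In K_inj]] :=
  periodic_minimal_period n_gt0 cover_component_shift K_periodic.
by exists d; split => //; rewrite components_cyclic_cover K_In; exact: inj_card_eq.
Qed.

End CyclicCover.

Lemma continuous_iter (T : topologicalType) (f : T -> T) (n : nat) :
  continuous f -> continuous (iter n f).
Proof.
move=> cf; elim: n => [|n IH] y; first exact: cvg_id.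
exact: continuous_comp (IH y) (cf _).
Qed.

Section OmegaLimit.
Variables (R : realType) (X : pseudoMetricType R).
Implicit Types (f g : X -> X) (x z : X).

Lemma omega_limitE g z : omega_limit g z = cluster_seq (fun m => iter m g z).
Proof.
apply/seteqP; split => y.
  move=> [phi [phi_oo phi_cvg]] e e0 M.
  have [i [Mi yi]] := filter_ex (filterI (phi_oo M) (cvg_ball phi_cvg e0)).
  by exists (phi i).
move=> yclu.
have /choice [phi phiP] : forall k : nat, exists m : nat,
    (k <= m)%N /\ ball y k.+1%:R^-1 (iter m g z).
  by move=> k; have [m km ym] := yclu k.+1%:R^-1 ltac:(by []) k; exists m.
exists phi; split.
  by move=> M; exists M => // i /= Mi; apply: leq_trans Mi (proj1 (phiP i)).
apply/cvg_ballP => e e0.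
apply: filterS (near_infty_natSinv_lt (PosNum e0)) => i /= ie.
by apply: le_ball (proj2 (phiP i)); exact: ltW.
Qed.

Lemma omega_limit_neq0 g z : compact [set: X] -> omega_limit g z !=set0.
Proof. by rewrite omega_limitE; exact: cluster_seq_neq0. Qed.

Lemma connected_omega_limit g z : compact [set: X] -> continuous g ->
  omega_limit g z `<=` Fix g -> connected (omega_limit g z).
Proof. by rewrite omega_limitE => cX; exact: connected_cluster_seq_orbit. Qed.

Lemma omega_limit_shift g z : omega_limit g (g z) = omega_limit g z.
Proof.
rewrite !omega_limitE -[RHS]cluster_seqS; congr cluster_seq.
by apply: funext => m; rewrite iterSr.
Qed.

Lemma omega_limit_image h g z : continuous h -> (forall y, h (g y) = g (h y)) ->
  h @` omega_limit g z `<=` omega_limit g (h z).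
Proof.
move=> ch hg; rewrite !omega_limitE.
have h_orbit : h \o (fun m => iter m g z) = fun m => iter m g (h z).
  by apply: funext => m /=; elim: m => //= m IH; rewrite hg IH.
by rewrite -h_orbit; exact: cluster_seq_image.
Qed.

Lemma omega_limit_iterE f n i x :
  omega_limit (iter n f) (iter i f x) = cluster_seq (fun m => iter (n * m + i) f x).
Proof.
rewrite omega_limitE; congr cluster_seq.
by apply: funext => m; rewrite iterD mulnC iterM.
Qed.

Lemma omega_limit_iter_sub f n i x : (0 < n)%N ->
  omega_limit (iter n f) (iter i f x) `<=` omega_limit f x.
Proof.
move=> n_gt0; rewrite omega_limit_iterE omega_limitE.
apply: (cluster_seq_sub (g := fun m => n * m + i)%N) => m.
exact: leq_trans (leq_pmull m n_gt0) (leq_addr i _).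
Qed.

Lemma omega_limit_iter_cover f n x : (0 < n)%N ->
  omega_limit f x `<=` \bigcup_(i in `I_n) omega_limit (iter n f) (iter i f x).
Proof.
move=> n_gt0; rewrite omega_limitE => y /(cluster_seq_cover n_gt0)[i ilt yi].
by exists i => //; rewrite omega_limit_iterE.
Qed.

End OmegaLimit.

Theorem corollary1p2 (R : realType) (X : metricType R) (f : X -> X) (n : nat) (x : X) :
  compact [set: X] -> continuous f -> (1 <= n)%N ->
  omega_limit f x `<=` Fix (iter n f) ->
  exists k : nat, (k %| n)%N /\ components (omega_limit f x) #= `I_k.
Proof.
move=> cX cf n_gt0 omega_fix.
apply: (@card_components_cyclic_cover _ f _
  (fun i => omega_limit (iter n f) (iter i f x))) => // [i|i|i||i|i].
- exact: omega_limit_neq0.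
- apply: connected_omega_limit => //; first exact: continuous_iter.
  by move=> y /(omega_limit_iter_sub n_gt0)/omega_fix.
- exact: omega_limit_iter_sub.
- exact: omega_limit_iter_cover.
- by apply: omega_limit_image => // y; rewrite -iterS iterSr.
- by rewrite addnC iterD omega_limit_shift.
Qed.
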